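(* Let $a_1,a_2,\dots$ be complex numbers, and let $r,k\geq0$ and $n$ be integers. Then $\mathcal{A}_{n,k}(a_{r+1},a_{r+2},\dots)$ equals \[ \sum_{j_1+j_2+\cdots+j_{r+1}=k}\binom{k}{j_1,j_2,\dots,j_{r+1}}(-a_1)^{j_1}(-a_2)^{j_2}\cdots(-a_r)^{j_r}\,\mathcal{A}_{n+J+rj_{r+1},\,j_{r+1}}(a_1,a_2,\dots), \] where $J=(r-1)j_1+(r-2)j_2+\cdots+1\cdot j_{r-1}$ and the sum is over all $j_1,\dots,j_{r+1}\in\mathbb{Z}_{\geq0}$ with sum $k$.
   Context: For integers $n$ and $k\geq0$ and a sequence $b_1,b_2,\dots$, the De Moivre polynomial $\mathcal{A}_{n,k}(b_1,b_2,\dots)$ is the coefficient of $x^n$ in $(b_1x+b_2x^2+b_3x^3+\cdots)^k$ (so $\mathcal{A}_{0,0}=1$ and $\mathcal{A}_{n,k}=0$ for $n<k$). $\binom{k}{j_1,\dots,j_{r+1}}$ is the multinomial coefficient. *)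

From mathcomp Require Import all_boot all_algebra.
From mathcomp Require Import complex.
From mathcomp Require Import Rstruct.
From Stdlib Require Import Reals.

Set Implicit Arguments.
Unset Strict Implicit.
Unset Printing Implicit Defensive.

Import GRing.Theory Num.Theory.
Local Open Scope ring_scope.

Definition CC : Type := complex Rdefinitions.R.

(* De Moivre polynomial A_{n,k}(b_1, b_2, ...): the coefficient of x^n in
   (b_1 x + b_2 x^2 + ...)^k.  The sequence is b : nat -> R with b_i = b i
   for i >= 1 (the value b 0 is never used).  For n >= 0 only the terms
   b_1 x, ..., b_n x^n can contribute to the coefficient of x^n, so the
   power series is truncated to the polynomial \sum_{1<=i<=n} b_i x^i. *)
Definition deMoivre (R : comNzRingType) (b : nat -> R) (n : int) (k : nat) : R :=
  match n with
  | Posz m => ((\sum_(1 <= i < m.+1) b i *: 'X^i : {poly R}) ^+ k)`_m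
  | Negz _ => 0
  end.

Definition multinom (m k : nat) (j : 'I_m -> nat) : nat :=
  divn (factorial k) (\prod_(i < m) factorial (j i))%N.

From mathcomp Require Import all_boot all_algebra.
From mathcomp Require Import complex.
From mathcomp Require Import Rstruct.
From mathcomp Require Import zify ring.

Set Implicit Arguments.
Unset Strict Implicit.
Unset Printing Implicit Defensive.

Import GRing.Theory Num.Theory.
Local Open Scope ring_scope.

(* Write f(x) = a_1 x + a_2 x^2 + ... and g(x) = a_(r+1) x + a_(r+2) x^2 + ...
   Then x^r g(x) = (-a_1) x + ... + (-a_r) x^r + f(x), so expanding
   x^(rk) g(x)^k by the multinomial theorem and reading off the coefficient
   of x^(n+rk) gives the identity: the summand indexed by j contributes
   prod_i (-a_i)^(j_i) times the coefficient of x^(n + rk - sum_i i j_i) in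
   f(x)^(j_(r+1)), and rk - sum_(i<=r) i j_i = J + r j_(r+1) since the j_i sum
   to k.  Power series are replaced by polynomial truncations of high enough
   degree, which do not change the coefficients involved. *)

Lemma dvdn_prod_fact_sum m (j : 'I_m -> nat) :
  (\prod_(i < m) (j i)`! %| (\sum_(i < m) j i)`!)%N.
Proof.
elim: m j => [|m IHm] j; first by rewrite !big_ord0.
rewrite !big_ord_recl -(bin_fact (leq_addr _ (j ord0))) addKn.
by rewrite dvdn_mull // dvdn_mul.
Qed.

Lemma eq_multinom m k (j1 j2 : 'I_m -> nat) :
  j1 =1 j2 -> multinom k j1 = multinom k j2.
Proof. by move=> j12; rewrite /multinom (eq_bigr _ (fun i _ => congr1 _ (j12 i))). Qed.

Lemma multinom_recl m k (j : 'I_m.+1 -> nat) : (\sum_(i < m.+1) j i)%N = k ->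
  multinom k j = ('C(k, j ord0) * multinom (k - j ord0) (fun i => j (lift ord0 i)))%N.
Proof.
rewrite big_ord_recl => <-; rewrite addKn /multinom big_ord_recl.
set s := (\sum_(i < m) _)%N; set p := (\prod_(i < m) _)%N.
have p_gt0 : (0 < p)%N by rewrite prodn_gt0 // => i; rewrite fact_gt0.
rewrite -(bin_fact (leq_addr s (j ord0))) addKn -{1}(divnK (dvdn_prod_fact_sum _)) -/s -/p.
rewrite [X in (X %/ _)%N](_ : _ = 'C(j ord0 + s, j ord0) * (s`! %/ p) * ((j ord0)`! * p))%N.
  by rewrite mulnK // muln_gt0 fact_gt0.
by ring.
Qed.

Section FfunCons.
Variables (T : finType) (m : nat).

Definition ffun_cons (x : T) (g : {ffun 'I_m -> T}) : {ffun 'I_m.+1 -> T} :=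
  [ffun i => if unlift ord0 i is Some i' then g i' else x].

Lemma ffun_cons0 x g : ffun_cons x g ord0 = x.
Proof. by rewrite ffunE unlift_none. Qed.

Lemma ffun_cons_lift x g i : ffun_cons x g (lift ord0 i) = g i.
Proof. by rewrite ffunE liftK. Qed.

Lemma big_ffun_cons R (idx : R) (op : Monoid.com_law idx) (F : {ffun 'I_m.+1 -> T} -> R) :
  \big[op/idx]_(f : {ffun 'I_m.+1 -> T}) F f =
  \big[op/idx]_(x : T) \big[op/idx]_(g : {ffun 'I_m -> T}) F (ffun_cons x g).
Proof.
rewrite pair_big /= (reindex (fun p => ffun_cons p.1 p.2)) //.
exists (fun f : {ffun 'I_m.+1 -> T} => (f ord0, [ffun i => f (lift ord0 i)])).
  move=> [x g] _ /=; rewrite ffun_cons0; congr pair.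
  by apply/ffunP => i; rewrite ffunE ffun_cons_lift.
move=> f _; apply/ffunP => i; rewrite ffunE /=.
by case: unliftP => [i' ->|->]; rewrite ?ffunE.
Qed.

End FfunCons.

Section Multinomial.
Variable R : comPzSemiRingType.

Lemma expr_sum_multinom m K k (x : 'I_m -> R) : (k < K)%N ->
  (\sum_(i < m) x i) ^+ k =
  \sum_(j : {ffun 'I_m -> 'I_K} | (\sum_(i < m) (j i : nat))%N == k)
     (multinom k (fun i => nat_of_ord (j i)))%:R * \prod_(i < m) x i ^+ j i.
Proof.
elim: m k x => [|m IHm] k x ltkK.
  rewrite big_ord0 expr0n; case: k ltkK => [|k] ltkK /=; last first.
    by rewrite big_pred0 // => j; rewrite big_ord0.
  rewrite (big_pred1 [ffun=> Ordinal ltkK]) => [|j].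
    by rewrite /multinom !big_ord0 mulr1.
  by rewrite /= big_ord0 eqxx; symmetry; apply/eqP/ffunP => -[].
rewrite big_ord_recl addrC exprDn [RHS]big_mkcond big_ffun_cons /=.
rewrite (bigID (fun l : 'I_K => (l < k.+1)%N)) /= [X in _ + X]big1 ?addr0 => [|l]; last first.
  rewrite ltnS -ltnNge => ltkl; apply: big1 => g _.
  by rewrite big_ord_recl ffun_cons0; case: eqP => // sum_k; move: ltkl; lia.
rewrite (big_ord_narrow ltkK); apply: eq_bigr => l _.
rewrite (IHm (k - l)%N) ?(leq_ltn_trans (leq_subr _ _) ltkK) //.
rewrite big_mkcond mulr_suml -sumrMnl; apply: eq_bigr => g _.
set f := ffun_cons _ g; have f0 : f ord0 = widen_ord ltkK l by rewrite ffun_cons0.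
have fS i : f (lift ord0 i) = g i by rewrite ffun_cons_lift.
have sum_f : (\sum_(i < m.+1) (f i : nat) = l + \sum_(i < m) (g i : nat))%N.
  by rewrite big_ord_recl f0; congr addn; apply: eq_bigr => i _; rewrite fS.
have prod_f : \prod_(i < m.+1) x i ^+ f i = x ord0 ^+ l * \prod_(i < m) x (lift ord0 i) ^+ g i.
  by rewrite big_ord_recl f0; congr (_ * _); apply: eq_bigr => i _; rewrite fS.
rewrite sum_f prod_f.
have le_lk : (l <= k)%N := ltn_ord l.
have -> : ((l + \sum_(i < m) (g i : nat))%N == k) = ((\sum_(i < m) (g i : nat))%N == k - l)%N.
  by apply/eqP/eqP; lia.
case: eqP => [sum_g|]; last by rewrite mul0r mul0rn.
rewrite (multinom_recl (k := k)) ?sum_f ?sum_g ?subnKC // f0.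
rewrite (@eq_multinom _ _ (fun i => f (lift ord0 i)) (fun i => g i)) => [|i]; last by rewrite fS.
by rewrite natrM -mulr_natr /=; ring.
Qed.

End Multinomial.

Section SeriesTrunc.
Variable R : comNzRingType.
Implicit Types (b : nat -> R) (p q : {poly R}).

Definition series_trunc b N : {poly R} := \sum_(1 <= i < N) b i *: 'X^i.

Lemma coef_exprDXnM p q d k i : (i < d)%N -> ((p + 'X^d * q) ^+ k)`_i = (p ^+ k)`_i.
Proof.
move=> ltid; have [s ->] : exists s, (p + 'X^d * q) ^+ k = p ^+ k + 'X^d * s.
  elim: k => [|k [s IHk]]; first by exists 0; rewrite mulr0 addr0.
  by exists (q * (p ^+ k + 'X^d * s) + p * s); rewrite !exprS IHk; ring.
by rewrite coefD coefXnM ltid addr0.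
Qed.

Lemma coefXnMD d e p t : ('X^(e + d) * p)`_(t + d) = ('X^e * p)`_t.
Proof. by rewrite !coefXnM ltn_add2r subnDr. Qed.

Lemma series_truncD b N M : (N < M)%N ->
  series_trunc b M = series_trunc b N.+1 + 'X^(N.+1) * \sum_(N.+1 <= i < M) b i *: 'X^(i - N.+1).
Proof.
move=> ltNM; rewrite /series_trunc (@big_cat_nat _ _ _ N.+1) //= big_distrr /=.
by congr (_ + _); apply: eq_big_nat => i /andP[ltNi _]; rewrite -scalerAr -exprD subnKC.
Qed.

Lemma deMoivre_series_trunc b (m N : nat) k : (m < N)%N ->
  deMoivre b m k = (series_trunc b N ^+ k)`_m.
Proof. by move=> ltmN; rewrite (series_truncD b ltmN) coef_exprDXnM. Qed.

Lemma deMoivre_neg b (z : int) k : z < 0 -> deMoivre b z k = 0.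
Proof. by case: z. Qed.

Lemma deMoivre_coefXnM b (t e N : nat) k : (t < N + e)%N ->
  deMoivre b (t%:Z - e%:Z) k = ('X^e * series_trunc b N ^+ k)`_t.
Proof.
move=> lttNe; rewrite coefXnM; case: ltnP => [ltte|leet].
  by rewrite deMoivre_neg // subr_lt0 ltz_nat.
by rewrite subzn // (deMoivre_series_trunc _ _ (N := N)) //; lia.
Qed.

End SeriesTrunc.

Lemma neq_ord_max r (i : 'I_r.+1) : (i != ord_max) = (i < r)%N.
Proof. by rewrite -(inj_eq val_inj) /= ltn_neqAle -ltnS ltn_ord andbT. Qed.

Lemma big_ord_recr_cond R (idx : R) (op : Monoid.com_law idx) r (F : 'I_r.+1 -> R) :
  \big[op/idx]_(i < r.+1) F i = op (\big[op/idx]_(i < r.+1 | (i < r)%N) F i) (F ord_max).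
Proof. by rewrite (bigD1 ord_max) // Monoid.mulmC; under eq_bigl do rewrite neq_ord_max. Qed.

Lemma muln_sum_split_weights r (j : 'I_r.+1 -> nat) :
  (r * \sum_(i < r.+1) j i =
   \sum_(i < r.+1 | (i < r)%N) (r.-1 - i) * j i + r * j ord_max
   + \sum_(i < r.+1 | (i < r)%N) i.+1 * j i)%N.
Proof.
have weights_r : (\sum_(i < r.+1 | (i < r)%N) (r.-1 - i) * j i
    + \sum_(i < r.+1 | (i < r)%N) i.+1 * j i = \sum_(i < r.+1 | (i < r)%N) r * j i)%N.
  by rewrite -big_split; apply: eq_bigr => i ltir /=; rewrite -mulnDl; congr muln; lia.
by rewrite big_ord_recr_cond mulnDr big_distrr /= -weights_r addnAC.
Qed.

Section ShiftedSeries.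
Variable R : comNzRingType.
Implicit Types (b : nat -> R).

Definition shift_summand b r (N : nat) (i : 'I_r.+1) : {poly R} :=
  if (i < r)%N then (- b i.+1) *: 'X^(i.+1) else series_trunc b (N + r).

Lemma XnM_series_trunc_shift b r N : (0 < N)%N ->
  'X^r * series_trunc (fun i => b (i + r)) N = \sum_(i < r.+1) shift_summand b N i.
Proof.
move=> N_gt0; rewrite big_ord_recr /= /shift_summand ltnn.
under eq_bigr => i _ do rewrite /= ltn_ord.
rewrite {2}/series_trunc (@big_cat_nat _ _ _ r.+1) //=; last by lia.
rewrite big_add1 /= big_mkord addrA -big_split /= big1 ?add0r => [|i _]; last first.
  by rewrite scaleNr addNr.
rewrite -(add1n r) big_addn addnK /series_trunc big_distrr /=.
by apply: eq_big_nat => i _; rewrite -scalerAr -exprD addnC.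
Qed.

Lemma prod_shift_summand b r N (j : 'I_r.+1 -> nat) :
  \prod_(i < r.+1) shift_summand b N i ^+ j i =
  (\prod_(i < r.+1 | (i < r)%N) (- b i.+1) ^+ j i)
    *: ('X^(\sum_(i < r.+1 | (i < r)%N) i.+1 * j i) * series_trunc b (N + r) ^+ j ord_max).
Proof.
rewrite big_ord_recr_cond /= {2}/shift_summand ltnn scalerAl -prodrXr -scaler_prod.
by congr (_ * _); apply: eq_bigr => i ltir; rewrite /shift_summand ltir exprZn exprM.
Qed.

End ShiftedSeries.

Theorem proposition7p2 (a : nat -> CC) (r k : nat) (n : int) :
  deMoivre (fun i => a (i + r)%N) n k =
  \sum_(j : {ffun 'I_r.+1 -> 'I_k.+1} | (\sum_(i < r.+1) (j i : nat))%N == k)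
    (multinom k (fun i => nat_of_ord (j i)))%:R
    * (\prod_(i < r.+1 | (i < r)%N) (- a i.+1) ^+ j i)
    * deMoivre a
        (n + ((\sum_(i < r.+1 | (i < r)%N) (r.-1 - i) * j i)%N)%:Z
           + (r * j ord_max)%N%:Z)
        (j ord_max).
Proof.
(* With n = t - e for naturals t, e, negative indices need no separate case. *)
have [t [e ->]] : exists t e : nat, n = t%:Z - e%:Z.
  by case: n => [t|e]; [exists t, 0%N | exists 0%N, e.+1]; rewrite ?subr0 ?NegzE ?sub0r.
set N := (t + r * k).+1.
rewrite (deMoivre_coefXnM _ _ (N := N)); last by lia.
rewrite -(coefXnMD (r * k)) exprD -mulrA exprM -exprMn XnM_series_trunc_shift //.
rewrite (expr_sum_multinom _ (ltnSn k)) mulr_sumr coef_sum.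
apply: eq_bigr => j /eqP sum_j.
rewrite prod_shift_summand mulrCA -polyC_natr coefCM -scalerAr coefZ !mulrA -exprD.
rewrite -(deMoivre_coefXnM _ _ (N := N + r)); last by lia.
congr (_ * deMoivre _ _ _).
have := muln_sum_split_weights (fun i => nat_of_ord (j i)); rewrite sum_j.
set A := (\sum_(i < r.+1 | _) (r.-1 - i) * _)%N; set B := (\sum_(i < r.+1 | _) i.+1 * _)%N.
set jm := nat_of_ord (j ord_max); lia.
Qed.
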